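(* Let $A\in\mathbb{R}^{m\times n}$, $b\in\mathbb{R}^m$, $f(x)=\frac12\|Ax-b\|^2$, let $L>0$ be a Lipschitz constant of $\nabla f$, $\lambda>0$, and $H(x)=f(x)+\lambda\|x\|_0$. Let $\{x_k\},\{y_k\}$ be generated by the VMEPIHT method with the choice of $H_k$ and $\alpha_k$ described in the context. Let $x^*$ be any cluster point of $\{x_k\}$ (so $x^*$ is a local minimizer of $H$), let $k_0$ be an index such that $I(y_k)=I(x_k)=I(x^* )$ for all $k\geq k_0$, and assume $\alpha_k>0$ for all $k\geq k_0$. Let $S=\{1,\dots,n\}\setminus I(x^* )$, let $Q$ be the principal submatrix of $A^TA$ indexed by $S$, and for $k\geq k_0$ let $H_k^*$ be the principal submatrix of $H_k$ indexed by $S$ and $d_k^*=-H_k^*(\nabla f(x_k))_S$. Then: (1) $\|x_k-x^*\|^2_{A^TA}$ and $\|y_k-x^*\|^2_{A^TA}$ ($k\ge k_0$) are non-increasing and tend to $0$; moreover, if $\|y_k-x^*\|^2_{A^TA}=0$ for some $k\geq k_0$, then $y_k$ is a local minimizer of $H$; (2) if there are constants $0<m\le M$ with $mI\preceq H_k\preceq MI$ for all $k$, then $\|x_k-x^*\|^2_{A^TA}$ converges to $0$ linearly, i.e. there is $c\in[0,1)$ with $\|x_{k+1}-x^*\|^2_{A^TA}\le c\,\|x_k-x^*\|^2_{A^TA}$ for all $k\ge k_0$; (3) if moreover $Q$ is positive definite and $\lim_{k\to\infty}\frac{\|((H_k^* )^{-1}-Q)d_k^*\|}{\|d_k^*\|}=0$,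 then $\|x_k-x^*\|$ converges to $0$ superlinearly, i.e. $\lim_{k\to\infty}\frac{\|x_{k+1}-x^*\|}{\|x_k-x^*\|}=0$.
   Context: $\|x\|_0$ is the number of nonzero components of $x$; for a symmetric positive semidefinite $B$, $\|v\|_B^2=v^TBv$. For $x\in\mathbb{R}^n$, $I(x):=\{i:x_i=0\}$; for an index set $I$, $C_I:=\{x: x_i=0\ \forall i\in I\}$; $P_C$ is the Euclidean projection onto $C$. For a vector $v$ and index set $S$, $v_S$ is the subvector of entries indexed by $S$. VMEPIHT method: fix $\mu>0$ and a starting point $y_0$. For $k=0,1,2,\dots$: choose $x_k\in\arg\min_x \lambda\|x\|_0+\frac L2\|x-y_k+\frac1L\nabla f(y_k)\|^2+\frac\mu2\|x-y_k\|^2$; then set $y_{k+1}=P_{C_{I(x_k)}}(x_k-\alpha_kH_k\nabla f(x_k))$ with $H_k,\alpha_k$ chosen as follows. Let $S_k=\{1,\dots,n\}\setminus I(x_k)$. $H_k$ is symmetric positive definite and block diagonal with respect to the splitting $S_k$, $I(x_k)$ (i.e. $(H_k)_{ij}=0$ whenever exactly one of $i,j$ lies in $S_k$); let $H_k^k$ be its principal submatrix indexed by $S_k$, $Q^k$ the principal submatrix of $A^TA$ indexed by $S_k$, $g_k=(\nabla f(x_k))_{S_k}$ and $d_k^k=-H_k^kg_k$. If $Q^kd_k^k=0$ set $\alpha_k=0$; otherwise $\alpha_k=\frac{-g_k^Td_k^k}{(d_k^k)^TQ^kd_k^k}$ (exact line search). Thus $y_{k+1}$ equals $x_k+\alpha_kd_k^k$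 on $S_k$ and $0$ elsewhere. *)

From HB Require Import structures.
From mathcomp Require Import all_boot all_order all_algebra.
From mathcomp Require Import all_classical all_reals topology normedtype sequences.
Set Implicit Arguments. Unset Strict Implicit. Unset Printing Implicit Defensive.
Import Order.TTheory GRing.Theory Num.Theory.
Local Open Scope ring_scope.

Section VMEPIHT.
Variable R : realType.

Definition sqn {p : nat} (v : 'cV[R]_p) : R := \sum_i (v i 0) ^+ 2.
Definition enorm {p : nat} (v : 'cV[R]_p) : R := Num.sqrt (sqn v).

Definition qform {p : nat} (B : 'M[R]_p) (v : 'cV[R]_p) : R := (v^T *m B *m v) 0 0.

Definition l0 {n : nat} (x : 'cV[R]_n) : nat := #|[set i | x i 0 != 0]|.

Definition fobj {m n : nat} (A : 'M[R]_(m, n)) (b : 'cV[R]_m) (x : 'cV[R]_n) : R :=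
  2^-1 * sqn (A *m x - b).
Definition gradf {m n : nat} (A : 'M[R]_(m, n)) (b : 'cV[R]_m) (x : 'cV[R]_n)
  : 'cV[R]_n := A^T *m (A *m x - b).

Definition Hobj {m n : nat} (A : 'M[R]_(m, n)) (b : 'cV[R]_m) (lam : R)
  (x : 'cV[R]_n) : R := fobj A b x + lam * (l0 x)%:R.

Definition Iz {n : nat} (x : 'cV[R]_n) : {set 'I_n} := [set i | x i 0 == 0].
Definition Sset {n : nat} (x : 'cV[R]_n) : {set 'I_n} := ~: Iz x.

(* Euclidean projection onto C_I = {x : x_i = 0 for all i in I}
   (closed form: zero out the coordinates in I) *)
Definition projC {n : nat} (I : {set 'I_n}) (z : 'cV[R]_n) : 'cV[R]_n :=
  \col_i (if i \in I then 0 else z i 0).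

Definition psub {n : nat} (S : {set 'I_n}) (M : 'M[R]_n) : 'M[R]_#|S| :=
  \matrix_(i, j) M (enum_val i) (enum_val j).
Definition subv {n : nat} (S : {set 'I_n}) (v : 'cV[R]_n) : 'cV[R]_#|S| :=
  \col_i v (enum_val i) 0.

Definition spd {p : nat} (M : 'M[R]_p) : Prop :=
  M^T = M /\ forall v : 'cV[R]_p, v != 0 -> 0 < qform M v.

Definition block_diag {n : nat} (S : {set 'I_n}) (M : 'M[R]_n) : Prop :=
  forall i j, (i \in S) != (j \in S) -> M i j = 0.

(* exact line-search step size of the context *)
Definition alpha_rule {m n : nat} (A : 'M[R]_(m, n)) (b : 'cV[R]_m)
  (x : 'cV[R]_n) (H : 'M[R]_n) : R :=
  let S := Sset x in
  let g := subv S (gradf A b x) in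
  let d := - (psub S H *m g) in
  let Q := psub S (A^T *m A) in
  if Q *m d == 0 then 0 else - (g^T *m d) 0 0 / (d^T *m Q *m d) 0 0.

Definition iht_sub {m n : nat} (A : 'M[R]_(m, n)) (b : 'cV[R]_m) (L lam mu : R)
  (y z : 'cV[R]_n) : R :=
  lam * (l0 z)%:R + L / 2 * sqn (z - y + L^-1 *: gradf A b y)
  + mu / 2 * sqn (z - y).

Definition vmepiht {m n : nat} (A : 'M[R]_(m, n)) (b : 'cV[R]_m) (L lam mu : R)
  (Hs : nat -> 'M[R]_n) (alpha : nat -> R) (x y : nat -> 'cV[R]_n) : Prop :=
  forall k,
    (forall z, iht_sub A b L lam mu (y k) (x k) <= iht_sub A b L lam mu (y k) z)
    /\ spd (Hs k) /\ block_diag (Sset (x k)) (Hs k)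
    /\ alpha k = alpha_rule A b (x k) (Hs k)
    /\ y k.+1 = projC (Iz (x k)) (x k - alpha k *: (Hs k *m gradf A b (x k))).

Definition cluster_pt {n : nat} (x : nat -> 'cV[R]_n) (xs : 'cV[R]_n) : Prop :=
  forall e : R, 0 < e -> forall N : nat, exists k, (N <= k)%N /\ enorm (x k - xs) < e.

Definition local_min {n : nat} (F : 'cV[R]_n -> R) (x : 'cV[R]_n) : Prop :=
  exists2 d : R, 0 < d & forall z, enorm (z - x) < d -> F x <= F z.

End VMEPIHT.

(* Once the support has settled on S = supp x^*, both half-steps act on the
   S-coordinates only. Writing e for (x - x^* )_S, the x-step is a gradient step of length
   1 / (L + mu) and the y-step an exact line search along -H_k^* grad q, for the quadratic
   q(e) = e^T Q e / 2 + gam^T e with Q = (A^T A)_S and gam = (grad f(x^* ))_S. So q decreases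
   along the iterates by at least a multiple of |grad q|^2; as 0 is a cluster point of the
   errors, this forces gam = 0, hence q(e) = ||e||_Q^2 / 2, which gives (1). For (2), the
   pseudo-inverse of Q bounds ||e||_Q^2 by a multiple of |Q e|^2, which the gradient step
   decreases by a fixed fraction. For (3), Q times the error of the quasi-Newton step is
   (H_k^*^-1 - Q) d_k^*, and the exact line search keeps the next error within a constant
   multiple of it. *)
From HB Require Import structures.
From mathcomp Require Import all_boot all_order all_algebra.
From mathcomp Require Import all_classical all_reals topology normedtype sequences.
From mathcomp Require Import ring lra.
Import Order.TTheory GRing.Theory Num.Theory numFieldNormedType.Exports.
Set Implicit Arguments. Unset Strict Implicit. Unset Printing Implicit Defensive.
Local Open Scope ring_scope.
Local Open Scope classical_set_scope.

Section BilinearForm.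
Variable R : realType.

Definition bform p (M : 'M[R]_p) (u v : 'cV[R]_p) : R := (u^T *m M *m v) 0 0.

Definition psd p (M : 'M[R]_p) : Prop := forall v, 0 <= qform M v.

Lemma qformE p (M : 'M[R]_p) v : qform M v = bform M v v.
Proof. by []. Qed.

Lemma bformDl p (M : 'M[R]_p) u w v : bform M (u + w) v = bform M u v + bform M w v.
Proof. by rewrite /bform linearD /= !mulmxDl mxE. Qed.

Lemma bformDr p (M : 'M[R]_p) u w v : bform M v (u + w) = bform M v u + bform M v w.
Proof. by rewrite /bform !mulmxDr mxE. Qed.

Lemma bformZl p (M : 'M[R]_p) a u v : bform M (a *: u) v = a * bform M u v.
Proof. by rewrite /bform linearZ /= -!scalemxAl mxE. Qed.

Lemma bformZr p (M : 'M[R]_p) a u v : bform M v (a *: u) = a * bform M v u.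
Proof. by rewrite /bform -!scalemxAr mxE. Qed.

Lemma bformNl p (M : 'M[R]_p) u v : bform M (- u) v = - bform M u v.
Proof. by rewrite -scaleN1r bformZl mulN1r. Qed.

Lemma bformNr p (M : 'M[R]_p) u v : bform M v (- u) = - bform M v u.
Proof. by rewrite -scaleN1r bformZr mulN1r. Qed.

Lemma bform0l p (M : 'M[R]_p) v : bform M 0 v = 0.
Proof. by rewrite /bform trmx0 !mul0mx mxE. Qed.

Lemma bform0r p (M : 'M[R]_p) v : bform M v 0 = 0.
Proof. by rewrite /bform mulmx0 mxE. Qed.

Lemma bform_trmx p (M : 'M[R]_p) u v : bform M u v = bform M^T v u.
Proof.
have trE (N : 'M[R]_1) : N 0 0 = N^T 0 0 by rewrite mxE.
by rewrite /bform trE !trmx_mul trmxK mulmxA.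
Qed.

Lemma bformC p (M : 'M[R]_p) u v : M^T = M -> bform M u v = bform M v u.
Proof. by move=> sM; rewrite bform_trmx sM. Qed.

Lemma bformMr p (M N : 'M[R]_p) u v : bform M u (N *m v) = bform (M *m N) u v.
Proof. by rewrite /bform !mulmxA. Qed.

Lemma bform1Ml p (M N : 'M[R]_p) u v : M^T = M ->
  bform 1%:M (M *m u) v = bform M u v.
Proof. by move=> sM; rewrite /bform trmx_mul sM mulmx1. Qed.

Lemma bform1Mr p (M : 'M[R]_p) u v : bform 1%:M u (M *m v) = bform M u v.
Proof. by rewrite bformMr mul1mx. Qed.

Lemma bform_mulmx p q (M : 'M[R]_p) (N : 'M[R]_(p, q)) u v :
  bform M (N *m u) (N *m v) = bform (N^T *m M *m N) u v.
Proof. by rewrite /bform trmx_mul !mulmxA. Qed.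

Lemma bform1E p (u v : 'cV[R]_p) : bform 1%:M u v = \sum_i u i 0 * v i 0.
Proof. by rewrite /bform mulmx1 mxE; apply: eq_bigr => i _; rewrite mxE. Qed.

Lemma sqn_bform p (v : 'cV[R]_p) : sqn v = bform 1%:M v v.
Proof. by rewrite bform1E; apply: eq_bigr => i _; rewrite expr2. Qed.

Lemma sqn_ge0 p (v : 'cV[R]_p) : 0 <= sqn v.
Proof. by apply: sumr_ge0 => i _; rewrite sqr_ge0. Qed.

Lemma sqn_eq0 p (v : 'cV[R]_p) : sqn v = 0 -> v = 0.
Proof.
move=> /eqP; rewrite /sqn psumr_eq0 => [/allP v0|i _]; last by rewrite sqr_ge0.
apply/matrixP => i j; rewrite ord1 mxE.
by apply/eqP; rewrite -sqrf_eq0; apply: v0; rewrite mem_index_enum.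
Qed.

Lemma sqn_gt0 p (v : 'cV[R]_p) : v != 0 -> 0 < sqn v.
Proof. by move=> v0; rewrite lt_def sqn_ge0 andbT; apply: contra v0 => /eqP/sqn_eq0->. Qed.

Lemma sqnN p (v : 'cV[R]_p) : sqn (- v) = sqn v.
Proof. by rewrite !sqn_bform bformNl bformNr opprK. Qed.

Lemma sqnZ p a (v : 'cV[R]_p) : sqn (a *: v) = a ^+ 2 * sqn v.
Proof. by rewrite !sqn_bform bformZl bformZr mulrA expr2. Qed.

Lemma sqnD_le p (u v : 'cV[R]_p) : sqn (u + v) <= 2 * sqn u + 2 * sqn v.
Proof.
have := sqn_ge0 (u - v).
by rewrite !sqn_bform !(bformDl, bformDr, bformNl, bformNr) (bformC v u (trmx1 _ _)); lra.
Qed.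

Lemma dot_lbound p (u v : 'cV[R]_p) : - (sqn u + sqn v) / 2 <= bform 1%:M u v.
Proof.
have := sqn_ge0 (u + v).
by rewrite !sqn_bform !(bformDl, bformDr) (bformC v u (trmx1 _ _)); lra.
Qed.

Lemma enorm_sqr p (v : 'cV[R]_p) : enorm v ^+ 2 = sqn v.
Proof. by rewrite sqr_sqrtr // sqn_ge0. Qed.

Lemma enorm_ge0 p (v : 'cV[R]_p) : 0 <= enorm v.
Proof. exact: sqrtr_ge0. Qed.

Lemma psd1 p : psd (1%:M : 'M[R]_p).
Proof. by move=> v; rewrite qformE -sqn_bform sqn_ge0. Qed.

End BilinearForm.

Section FormInequalities.
Variable R : realType.

Lemma discriminant_le (a b c : R) : 0 <= c ->
  (forall t, 0 <= a + 2 * b * t + c * t ^+ 2) -> b ^+ 2 <= a * c.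
Proof.
move=> c0; have [-> nonneg|c_neq0 nonneg] := eqVneq c 0.
  have [->|b_neq0] := eqVneq b 0; first by rewrite expr0n mulr0.
  have := nonneg (- (a + 1) / (2 * b)).
  have -> : 2 * b * (- (a + 1) / (2 * b)) = - (a + 1) by field.
  by lra.
have c_gt0 : 0 < c by rewrite lt_def c_neq0.
have := nonneg (- b / c).
have -> : a + 2 * b * (- b / c) + c * (- b / c) ^+ 2 = a - b ^+ 2 / c by field.
by rewrite subr_ge0 ler_pdivrMr // mulrC.
Qed.

Lemma bform_CauchySchwarz p (M : 'M[R]_p) u v : M^T = M -> psd M ->
  bform M u v ^+ 2 <= qform M u * qform M v.
Proof.
move=> sM psdM; apply: discriminant_le => // t.
have := psdM (u + t *: v).
by rewrite !qformE !(bformDl, bformDr, bformZl, bformZr) (bformC v u sM); lra.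
Qed.

Lemma dot_CauchySchwarz p (u v : 'cV[R]_p) : bform 1%:M u v ^+ 2 <= sqn u * sqn v.
Proof. by rewrite !sqn_bform; apply: bform_CauchySchwarz; [exact: trmx1 | exact: psd1]. Qed.

Lemma dot_le_enorm p (u v : 'cV[R]_p) : `|bform 1%:M u v| <= enorm u * enorm v.
Proof.
rewrite -ler_sqr ?nnegrE ?mulr_ge0 ?enorm_ge0 //.
by rewrite real_normK ?num_real // exprMn !enorm_sqr dot_CauchySchwarz.
Qed.

Definition frob2 p q (M : 'M[R]_(p, q)) : R := \sum_i sqn (row i M)^T.

Lemma frob2_ge0 p q (M : 'M[R]_(p, q)) : 0 <= frob2 M.
Proof. by apply: sumr_ge0 => i _; exact: sqn_ge0. Qed.

Lemma sqn_mulmx_le p q (M : 'M[R]_(p, q)) v : sqn (M *m v) <= frob2 M * sqn v.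
Proof.
rewrite /sqn /frob2 mulr_suml; apply: ler_sum => i _.
have := dot_CauchySchwarz (row i M)^T v.
rewrite bform1E /sqn mxE; under eq_bigr do rewrite !mxE.
by under [X in _ <= X * _]eq_bigr do rewrite !mxE.
Qed.

Lemma le_mul_of_sqr_le (x K s : R) : 0 <= K -> 0 <= s ->
  x ^+ 2 <= K * s ^+ 2 -> x <= (K + 1) * s.
Proof.
move=> K0 s0 le_x; rewrite leNgt; apply/negP => lt_x.
have : ((K + 1) * s) ^+ 2 < x ^+ 2 by rewrite ltr_pXn2r // nnegrE; nra.
have : K * s ^+ 2 <= ((K + 1) * s) ^+ 2 by rewrite exprMn ler_wpM2r ?sqr_ge0 //; nra.
lra.
Qed.

(* [Q = Q Q^+ Q] with [Q^+ := pinvmx Q], so [v^T Q v = (Qv)^T Q^+ (Qv)] for symmetric [Q]. *)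
Lemma qform_le_sqn_mulmx p (Q : 'M[R]_p) v : Q^T = Q ->
  qform Q v <= (frob2 (pinvmx Q) + 1) * sqn (Q *m v).
Proof.
move=> sQ; have QPQ : Q = Q *m pinvmx Q *m Q by rewrite mulmxKpV.
have -> : qform Q v = bform 1%:M (Q *m v) (pinvmx Q *m (Q *m v)).
  by rewrite bform1Mr bform_mulmx sQ -QPQ.
apply: le_mul_of_sqr_le; [exact: frob2_ge0 | exact: sqn_ge0 |].
apply: le_trans (dot_CauchySchwarz _ _) _.
by rewrite expr2 mulrCA ler_wpM2l ?sqn_ge0 ?sqn_mulmx_le.
Qed.

Lemma qform_le_of_sqn_mulmx p (Q : 'M[R]_p) (L : R) v : Q^T = Q -> psd Q ->
  0 <= L -> (forall w, sqn (Q *m w) <= L ^+ 2 * sqn w) -> qform Q v <= L * sqn v.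
Proof.
move=> sQ psdQ L0 QL; rewrite -ler_sqr ?nnegrE ?mulr_ge0 ?sqn_ge0 ?psdQ //.
apply: le_trans (_ : sqn v * sqn (Q *m v) <= _).
  by rewrite qformE -bform1Mr dot_CauchySchwarz.
by rewrite exprMn mulrC expr2 mulrA ler_wpM2r ?sqn_ge0 ?QL.
Qed.

Lemma sqn_mulmx_le_qform p (H : 'M[R]_p) (c : R) v : H^T = H -> psd H -> 0 <= c ->
  (forall w, qform H w <= c * sqn w) -> sqn (H *m v) <= c * qform H v.
Proof.
move=> sH psdH c0 Hc.
have Hv2 : sqn (H *m v) ^+ 2 <= qform H v * (c * sqn (H *m v)).
  have -> : sqn (H *m v) ^+ 2 = bform H v (H *m v) ^+ 2.
    by rewrite sqn_bform bform1Ml // bform1Mr.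
  by apply: le_trans (bform_CauchySchwarz _ _ sH psdH) _; rewrite ler_wpM2l ?psdH ?Hc.
have [->|Hv_neq0] := eqVneq (sqn (H *m v)) 0.
  by rewrite mulr_ge0 ?psdH.
have Hv_gt0 : 0 < sqn (H *m v) by rewrite lt_def Hv_neq0 sqn_ge0.
rewrite -(ler_pM2r Hv_gt0) -expr2; apply: le_trans Hv2 _.
by rewrite mulrCA mulrA.
Qed.

Lemma spd_unitmx p (H : 'M[R]_p) : spd H -> H \in unitmx.
Proof.
move=> [sH pdH]; rewrite unitmxE unitfE; apply/negP => /det0P [v v_neq0 vH].
have := pdH v^T; rewrite trmx_eq0 => /(_ v_neq0).
by rewrite qformE /bform trmxK vH mul0mx mxE ltxx.
Qed.

End FormInequalities.

Section CoordinateSelection.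
Variables (R : realType) (n : nat) (S : {set 'I_n}).
Implicit Types u v : 'cV[R]_n.

Definition selmx : 'M[R]_(#|S|, n) := \matrix_(j, i) (enum_val j == i)%:R.

Definition supported (v : 'cV[R]_n) : Prop := forall i, i \notin S -> v i 0 = 0.

Lemma sum_delta_mul (T : finType) (a : T) (F : T -> R) :
  \sum_i (a == i)%:R * F i = F a.
Proof.
rewrite (bigD1 a) //= eqxx mul1r big1 ?addr0 // => i /negbTE.
by rewrite eq_sym => ->; rewrite mul0r.
Qed.

Lemma selmxE v j : (selmx *m v) j 0 = v (enum_val j) 0.
Proof. by rewrite mxE; under eq_bigr do rewrite mxE; rewrite sum_delta_mul. Qed.

Lemma subvE v : subv S v = selmx *m v.
Proof. by apply/matrixP => j k; rewrite ord1 mxE selmxE. Qed.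

Lemma subvB u v : subv S (u - v) = subv S u - subv S v.
Proof. by rewrite !subvE mulmxBr. Qed.

Lemma subvZ a v : subv S (a *: v) = a *: subv S v.
Proof. by rewrite !subvE scalemxAr. Qed.

Lemma selmx_trmx_notin (u : 'cV[R]_#|S|) i : i \notin S -> (selmx^T *m u) i 0 = 0.
Proof.
move=> iNS; rewrite mxE big1 // => j _; rewrite !mxE.
have /negbTE-> : enum_val j != i by apply: contraNneq iNS => <-; apply: enum_valP.
by rewrite mul0r.
Qed.

Lemma selmx_trmx_in (u : 'cV[R]_#|S|) i (iS : i \in S) :
  (selmx^T *m u) i 0 = u (enum_rank_in iS i) 0.
Proof.
rewrite mxE (bigD1 (enum_rank_in iS i)) //= big1 ?addr0.
  by rewrite !mxE enum_rankK_in // eqxx mul1r.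
move=> j j_neq; rewrite !mxE.
have /negbTE-> : enum_val j != i.
  by apply: contra j_neq => /eqP ji; rewrite -[j](enum_valK_in iS) ji.
by rewrite mul0r.
Qed.

Lemma selmx_trmxK : selmx *m selmx^T = 1%:M.
Proof.
apply/matrixP => j k; rewrite !mxE.
under eq_bigr do rewrite !mxE.
rewrite sum_delta_mul; have [<-|j_neq_k] := eqVneq j k; first by rewrite eqxx.
by rewrite (inj_eq enum_val_inj) eq_sym (negbTE j_neq_k).
Qed.

Lemma trmx_selmxK v : selmx^T *m (selmx *m v) = projC (~: S) v.
Proof.
apply/matrixP => i k; rewrite ord1 [RHS]mxE inE.
case: (boolP (i \in S)) => iS /=; last by rewrite selmx_trmx_notin.
by rewrite selmx_trmx_in selmxE enum_rankK_in.
Qed.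

Lemma projC_supported v : supported v -> projC (~: S) v = v.
Proof.
move=> sv; apply/matrixP => i k; rewrite ord1 mxE inE.
by case: (boolP (i \in S)) => iS //=; rewrite sv.
Qed.

Lemma subvK v : supported v -> selmx^T *m subv S v = v.
Proof. by move=> sv; rewrite subvE trmx_selmxK projC_supported. Qed.

Lemma subv_projC v : subv S (projC (~: S) v) = subv S v.
Proof. by rewrite !subvE -trmx_selmxK mulmxA selmx_trmxK mul1mx. Qed.

Lemma psubE (M : 'M[R]_n) : psub S M = selmx *m M *m selmx^T.
Proof.
apply/matrixP => j k; rewrite mxE -mulmxA.
have -> : (selmx *m (M *m selmx^T)) j k = (selmx *m col k (M *m selmx^T)) j 0.
  by rewrite !mxE; apply: eq_bigr => i _; rewrite !mxE.
rewrite selmxE !mxE; under eq_bigr do rewrite !mxE mulrC.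
by rewrite sum_delta_mul.
Qed.

Lemma psub_trmx (M : 'M[R]_n) : M^T = M -> (psub S M)^T = psub S M.
Proof. by move=> sM; rewrite !psubE !trmx_mul trmxK sM mulmxA. Qed.

Lemma sqn_lift (u : 'cV[R]_#|S|) : sqn (selmx^T *m u) = sqn u.
Proof. by rewrite !sqn_bform bform_mulmx trmxK mulmx1 selmx_trmxK. Qed.

Lemma qform_lift (M : 'M[R]_n) (u : 'cV[R]_#|S|) :
  qform M (selmx^T *m u) = qform (psub S M) u.
Proof. by rewrite !qformE bform_mulmx trmxK psubE. Qed.

Lemma qform_supported (M : 'M[R]_n) v : supported v ->
  qform M v = qform (psub S M) (subv S v).
Proof. by move=> sv; rewrite -qform_lift subvK. Qed.

Lemma sqn_supported v : supported v -> sqn v = sqn (subv S v).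
Proof. by move=> sv; rewrite -sqn_lift subvK. Qed.

Lemma sqn_subv_le v : sqn (subv S v) <= sqn v.
Proof.
rewrite /sqn; under eq_bigr do rewrite mxE.
rewrite -(big_enum_val (fun i => v i 0 ^+ 2)) /= big_mkcond /=.
by apply: ler_sum => i _; case: ifP => // _; apply: sqr_ge0.
Qed.

Lemma subv_block_diag_mulmx (H : 'M[R]_n) v : block_diag S H ->
  subv S (H *m v) = psub S H *m subv S v.
Proof.
move=> bdH; rewrite !subvE psubE -!mulmxA trmx_selmxK.
apply/matrixP => j k; rewrite ord1 !selmxE !mxE; apply: eq_bigr => i _.
rewrite mxE inE; case: (boolP (i \in S)) => iS //=.
by rewrite bdH ?mul0r // enum_valP iS.
Qed.

End CoordinateSelection.

Lemma setC_Sset (R : realType) n (v : 'cV[R]_n) : ~: Sset v = Iz v.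
Proof. exact: finset.setCK. Qed.

Lemma supported_Sset (R : realType) n (u v : 'cV[R]_n) :
  Iz u = Iz v -> supported (Sset v) (u - v).
Proof.
move=> Iz_eq i; rewrite !inE negbK => /eqP vi0.
have : i \in Iz u by rewrite Iz_eq inE vi0.
by rewrite inE !mxE vi0 => /eqP ->; rewrite subrr.
Qed.

Arguments selmx {R n} S.

Section LeastSquares.
Variables (R : realType) (m n : nat) (A : 'M[R]_(m, n)) (b : 'cV[R]_m).
Implicit Types (u v y z : 'cV[R]_n).

Lemma gradfB u v : gradf A b u - gradf A b v = (A^T *m A) *m (u - v).
Proof.
rewrite /gradf -mulmxBr -mulmxA; congr (_ *m _).
by rewrite mulmxBr; apply/matrixP => i j; rewrite !mxE; ring.
Qed.

Lemma qform_AtA v : qform (A^T *m A) v = sqn (A *m v).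
Proof. by rewrite qformE sqn_bform /bform !mulmx1 trmx_mul !mulmxA. Qed.

Lemma fobjD u v :
  fobj A b (u + v) = fobj A b u + bform 1%:M (gradf A b u) v + sqn (A *m v) / 2.
Proof.
have -> : bform 1%:M (gradf A b u) v = bform 1%:M (A *m u - b) (A *m v).
  by rewrite /bform !mulmx1 trmx_mul trmxK mulmxA.
rewrite /fobj mulmxDr addrAC; move: (A *m u - b) (A *m v) => c w.
by rewrite !sqn_bform !(bformDl, bformDr) (bformC w c (trmx1 _ _)); field.
Qed.

Lemma fobj_ge_linear u v :
  fobj A b u + bform 1%:M (gradf A b u) (v - u) <= fobj A b v.
Proof. by rewrite -{2}(subrKC u v) fobjD lerDl divr_ge0 ?sqn_ge0. Qed.

Definition iht_smooth (L mu : R) y z : R :=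
  L / 2 * sqn (z - y + L^-1 *: gradf A b y) + mu / 2 * sqn (z - y).

(* Completing the square in each coordinate; [zI] is the projection onto [C_I] of the
   gradient step of length [1 / (L + mu)]. *)
Lemma iht_smooth_decomp (L mu : R) y z (I : {set 'I_n}) :
  0 < L -> 0 <= mu -> (forall i, i \in I -> z i 0 = 0) ->
  let zI := projC I (y - (L + mu)^-1 *: gradf A b y) in
  iht_smooth L mu y z = iht_smooth L mu y zI + (L + mu) / 2 * sqn (z - zI).
Proof.
move=> L_gt0 mu_ge0 zI0 zI.
have L_neq0 : L != 0 by rewrite gt_eqF.
have Lmu_neq0 : L + mu != 0 by rewrite gt_eqF ?ltr_wpDr.
rewrite /iht_smooth /sqn !mulr_sumr -!big_split /=; apply: eq_bigr => i _.
rewrite !mxE; case: ifP => iI; first by rewrite zI0 //; ring.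
by field; rewrite Lmu_neq0 L_neq0.
Qed.

Lemma iht_sub_minimizerE (L lam mu : R) y x :
  0 < L -> 0 <= mu -> 0 <= lam ->
  (forall z, iht_sub A b L lam mu y x <= iht_sub A b L lam mu y z) ->
  x = projC (Iz x) (y - (L + mu)^-1 *: gradf A b y).
Proof.
move=> L_gt0 mu_ge0 lam_ge0 x_min.
set xI := projC (Iz x) _.
have iht_subE z : iht_sub A b L lam mu y z = lam * (l0 z)%:R + iht_smooth L mu y z.
  by rewrite /iht_sub /iht_smooth addrA.
have l0_le : lam * (l0 xI)%:R <= lam * (l0 x)%:R.
  rewrite ler_wpM2l // ler_nat; apply/subset_leq_card/fintype.subsetP => i.
  by rewrite !inE; apply: contraNN => /eqP xi0; rewrite mxE inE xi0 eqxx.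
have Lmu_gt0 : 0 < (L + mu) / 2 by rewrite divr_gt0 ?ltr_wpDr.
have := x_min xI; rewrite !iht_subE (@iht_smooth_decomp L mu y x (Iz x)) //; last first.
  by move=> i; rewrite inE => /eqP.
move=> le_xI; have dist_ge0 := sqn_ge0 (x - xI).
have /sqn_eq0 /eqP : sqn (x - xI) = 0 by nra.
by rewrite subr_eq0 => /eqP.
Qed.

Lemma finite_pos_lower_bound (I : finType) (F : I -> R) :
  (forall i, 0 < F i) -> exists2 d, 0 < d & forall i, d <= F i.
Proof.
move=> F_gt0.
suff [d d_gt0 dF] : exists2 d, 0 < d & forall i, i \in enum I -> d <= F i.
  by exists d => // i; apply: dF; rewrite mem_enum.
elim: (enum I) => [|a s [d d_gt0 dF]]; first by exists 1.
exists (Order.min d (F a)); first by rewrite lt_min d_gt0 F_gt0.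
move=> i; rewrite inE => /orP [/eqP ->|/dF d_le]; first by rewrite ge_min lexx orbT.
by rewrite ge_min d_le.
Qed.

Lemma entry_le_enorm v i : `|v i 0| <= enorm v.
Proof.
rewrite -(ler_pXn2r (n := 2)) ?nnegrE ?enorm_ge0 // enorm_sqr real_normK ?num_real //.
by rewrite /sqn (bigD1 i) //= lerDl sumr_ge0 // => j _; rewrite sqr_ge0.
Qed.

Lemma near_support y : exists2 d, 0 < d &
  forall z, enorm (z - y) < d -> forall i, y i 0 != 0 -> z i 0 != 0.
Proof.
pose F i := if y i 0 != 0 then `|y i 0| else 1.
have F_gt0 i : 0 < F i by rewrite /F; case: ifPn => // yi0; rewrite normr_gt0.
have [d d_gt0 d_le] := finite_pos_lower_bound F_gt0.
exists d => // z zy_lt i yi0; apply: contraTneq zy_lt => zi0.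
rewrite -leNgt; apply: le_trans (entry_le_enorm (z - y) i).
by have := d_le i; rewrite /F yi0 !mxE zi0 add0r normrN.
Qed.

Lemma stationary_local_min y lam : 0 < lam ->
  (forall i, y i 0 != 0 -> gradf A b y i 0 = 0) -> local_min (Hobj A b lam) y.
Proof.
move=> lam_gt0 g0; set g := gradf A b y.
have [d d_gt0 supp_near] := near_support y.
have g1_gt0 : 0 < enorm g + 1 by rewrite ltr_wpDl ?enorm_ge0.
exists (Order.min (lam / (enorm g + 1)) d) => [|z]; first by rewrite lt_min d_gt0 divr_gt0.
rewrite lt_min => /andP [zy_lam zy_d]; rewrite /Hobj.
have := fobj_ge_linear y z; rewrite -/g => f_ge.
have [/existsP [i0 /andP [/eqP yi0 zi0]]|] := boolP [exists i, (y i 0 == 0) && (z i 0 != 0)].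
- have l0_lt : (l0 y < l0 z)%N.
    apply: proper_card; apply/properP; split.
      by apply/fintype.subsetP => i; rewrite !inE; exact: supp_near.
    by exists i0; rewrite !inE ?yi0 ?eqxx.
  have : lam * (l0 y)%:R + lam <= lam * (l0 z)%:R.
    by rewrite -[X in _ + X]mulr1 -mulrDr natr1 ler_wpM2l ?ler_nat ?ltW.
  have : - lam < bform 1%:M g (z - y).
    have := dot_le_enorm g (z - y); rewrite ler_norml => /andP [le_dot _].
    apply: lt_le_trans le_dot; rewrite ltrN2.
    rewrite ltr_pdivlMr // in zy_lam; have := enorm_ge0 (z - y); nra.
  lra.
- move=> /existsPn same.
  have supp_eq i : (z i 0 != 0) = (y i 0 != 0).
    by have := same i; case: eqP => [yi0 /= /negPn /eqP ->|/eqP /supp_near ->]; rewrite ?yi0 ?eqxx.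
  have -> : l0 z = l0 y by apply: eq_card => i; rewrite !inE supp_eq.
  have dot0 : bform 1%:M g (z - y) = 0.
    rewrite bform1E big1 // => i _; have [yi0|/g0 ->] := eqVneq (y i 0) 0; last by rewrite mul0r.
    by move: (supp_eq i); rewrite !mxE yi0 eqxx => /negbFE /eqP ->; rewrite subrr mulr0.
  lra.
Qed.

End LeastSquares.

Lemma squeeze_cvg0 (R : realType) (u v : nat -> R) (k0 : nat) :
  (forall k, (k0 <= k)%N -> 0 <= u k <= v k) -> v @ \oo --> 0 -> u @ \oo --> 0.
Proof.
move=> uv v0; apply: (squeeze_cvgr _ (cvg_cst 0) v0).
by near=> k; apply: uv; near: k; exact: nbhs_infty_ge.
Unshelve. all: by end_near.
Qed.

Lemma cvg_eq_from (R : realType) (u v : nat -> R) (k0 : nat) (l : R) :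
  (forall k, (k0 <= k)%N -> u k = v k) -> v @ \oo --> l -> u @ \oo --> l.
Proof.
move=> uv; apply: cvg_trans; apply: near_eq_cvg.
by near=> k; apply/esym/uv; near: k; exact: nbhs_infty_ge.
Unshelve. all: by end_near.
Qed.

Section ReducedIteration.
Variables (R : realType) (p : nat) (Q : 'M[R]_p) (gam : 'cV[R]_p).

Definition qgrad (e : 'cV[R]_p) : 'cV[R]_p := Q *m e + gam.
Definition qobj (e : 'cV[R]_p) : R := qform Q e / 2 + bform 1%:M gam e.
Definition qdir (H : 'M[R]_p) (e : 'cV[R]_p) : 'cV[R]_p := - (H *m qgrad e).

(* The VMEPIHT iteration once the support has settled on [S]: [eps k] and [eta k] stand for
   [(x_k - x^* )_S] and [(y_k - x^* )_S], [Q] for [(A^T A)_S], [gam] for [(grad f(x^* ))_S] and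
   [t] for [1 / (L + mu)]; [qobj] is [f] on [x^* + span S] up to a constant. *)
Record reduced_iteration (L t : R) (eps eta : nat -> 'cV[R]_p)
    (Hk : nat -> 'M[R]_p) (al : nat -> R) (k0 : nat) : Prop := {
  ri_sym : Q^T = Q;
  ri_psd : psd Q;
  ri_L_gt0 : 0 < L;
  ri_lipschitz : forall w, sqn (Q *m w) <= L ^+ 2 * sqn w;
  ri_t_gt0 : 0 < t;
  ri_tL : t * L <= 1;
  ri_eps : forall k, (k0 <= k)%N -> eps k = eta k - t *: qgrad (eta k);
  ri_eta : forall k, (k0 <= k)%N -> eta k.+1 = eps k + al k *: qdir (Hk k) (eps k);
  ri_al : forall k, (k0 <= k)%N -> al k =
    - bform 1%:M (qgrad (eps k)) (qdir (Hk k) (eps k)) / qform Q (qdir (Hk k) (eps k));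
  ri_al_gt0 : forall k, (k0 <= k)%N -> 0 < al k;
  ri_cluster : forall e, 0 < e -> forall N, exists2 k, (N <= k)%N & sqn (eps k) < e }.

Variables (L t : R) (eps eta : nat -> 'cV[R]_p) (Hk : nat -> 'M[R]_p) (al : nat -> R).
Variable k0 : nat.
Hypothesis RI : reduced_iteration L t eps eta Hk al k0.

Let Qsym := ri_sym RI.
Let Qpsd := ri_psd RI.
Let L_gt0 := ri_L_gt0 RI.
Let t_gt0 := ri_t_gt0 RI.
Local Notation dir k := (qdir (Hk k) (eps k)).

Lemma qform_le_L v : qform Q v <= L * sqn v.
Proof. exact: qform_le_of_sqn_mulmx Qsym Qpsd (ltW L_gt0) (ri_lipschitz RI). Qed.

Lemma qobjD e v : qobj (e + v) = qobj e + bform 1%:M (qgrad e) v + qform Q v / 2.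
Proof.
rewrite /qobj /qgrad !qformE !(bformDl, bformDr) (bformC v e Qsym) bform1Ml //; lra.
Qed.

Lemma qobj_grad_step e : qobj (e - t *: qgrad e) <= qobj e - t / 2 * sqn (qgrad e).
Proof.
rewrite qobjD bformNr bformZr -sqn_bform qformE bformNl bformNr bformZl bformZr -qformE.
have : t * qform Q (qgrad e) <= sqn (qgrad e).
  apply: le_trans (ler_wpM2l (ltW t_gt0) (qform_le_L _)) _.
  by rewrite mulrA -[X in _ <= X]mul1r ler_wpM2r ?sqn_ge0 ?(ri_tL RI).
have := sqn_ge0 (qgrad e); have := Qpsd (qgrad e); have := t_gt0; nra.
Qed.

Lemma qform_dir_neq0 k : (k0 <= k)%N -> qform Q (dir k) != 0.
Proof.
move=> k0k; apply: contraTneq (ri_al_gt0 RI k0k) => q0.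
by rewrite (ri_al RI k0k) q0 invr0 mulr0 ltxx.
Qed.

Lemma qobj_line_search k : (k0 <= k)%N -> qobj (eta k.+1) <= qobj (eps k).
Proof.
move=> k0k; rewrite (ri_eta RI k0k) qobjD bformZr qformE bformZl bformZr -qformE.
have al_q : al k * qform Q (dir k) = - bform 1%:M (qgrad (eps k)) (dir k).
  by rewrite (ri_al RI k0k) mulrAC -mulrA divff ?mulr1 ?qform_dir_neq0.
have := ri_al_gt0 RI k0k; have := Qpsd (dir k); nra.
Qed.

Lemma qobj_eps_decrease k : (k0 <= k)%N ->
  qobj (eps k.+1) <= qobj (eps k) - t / 2 * sqn (qgrad (eta k.+1)).
Proof.
move=> k0k; rewrite (ri_eps RI (leqW k0k)).
by apply: le_trans (qobj_grad_step _) _; rewrite lerD2r qobj_line_search.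
Qed.

Lemma qobj_eps_nonincreasing k k' : (k0 <= k)%N -> (k <= k')%N ->
  qobj (eps k') <= qobj (eps k).
Proof.
move=> k0k /subnK <-; elim: (k' - k)%N => [|j IHj]; first by rewrite add0n.
have k0jk : (k0 <= j + k)%N by rewrite (leq_trans k0k) ?leq_addl.
rewrite addSn; apply: le_trans (qobj_eps_decrease k0jk) (le_trans _ IHj).
by rewrite lerBlDr lerDl mulr_ge0 ?sqn_ge0 ?divr_ge0 ?ltW.
Qed.

Lemma qobj_eps_lower_bound k : (k0 <= k)%N -> - (sqn gam + 1) / 2 <= qobj (eps k).
Proof.
move=> k0k; have [k' kk' eps_lt1] := ri_cluster RI ltr01 k.
apply: le_trans (qobj_eps_nonincreasing k0k kk').
by have := dot_lbound gam (eps k'); have := Qpsd (eps k'); rewrite /qobj; lra.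
Qed.

Lemma qgrad_eps k : (k0 <= k)%N -> qgrad (eps k) = (1%:M - t *: Q) *m qgrad (eta k).
Proof.
move=> k0k; rewrite (ri_eps RI k0k) mulmxBl mul1mx -scalemxAl /qgrad mulmxBr.
by rewrite scalemxAr addrAC.
Qed.

(* As long as [gam != 0], [qgrad] stays away from zero at the iterates close to [0] that the
   cluster point provides, so [qobj] keeps dropping by a fixed amount. *)
Lemma qobj_eps_drop : gam != 0 -> exists2 D, 0 < D &
  forall k, (k0 <= k)%N -> exists2 k', (k0 <= k')%N & qobj (eps k') <= qobj (eps k) - D.
Proof.
move=> gam_neq0; set sg := sqn gam; set K := frob2 (1%:M - t *: Q).
have sg_gt0 : 0 < sg by exact: sqn_gt0.
have K1_gt0 : 0 < K + 1 by rewrite ltr_wpDl ?frob2_ge0.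
exists (t / 2 * (sg / (4 * (K + 1)))); first by rewrite !mulr_gt0 ?invr_gt0 ?mulr_gt0.
move=> k k0k; have L2_gt0 : 0 < L ^+ 2 by rewrite exprn_gt0.
have eps_bound : 0 < sg / (4 * L ^+ 2) by rewrite divr_gt0 ?mulr_gt0.
have [[//|k'] kk' eps_small] := ri_cluster RI eps_bound k.+1.
have k0k' : (k0 <= k')%N by rewrite (leq_trans k0k).
exists k'.+1; first exact: leqW.
have Qeps_small : sqn (Q *m eps k'.+1) < sg / 4.
  apply: le_lt_trans (ri_lipschitz RI _) _.
  have -> : sg / 4 = L ^+ 2 * (sg / (4 * L ^+ 2)) by field; rewrite gt_eqF.
  by rewrite ltr_pM2l.
have : sg <= 2 * sqn (qgrad (eps k'.+1)) + 2 * sqn (Q *m eps k'.+1).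
  rewrite -(sqnN (Q *m _)); apply: le_trans (sqnD_le _ _).
  by rewrite /qgrad addrAC subrr add0r.
rewrite qgrad_eps ?leqW // => sg_le.
have := sqn_mulmx_le (1%:M - t *: Q) (qgrad (eta k'.+1)); rewrite -/K => qgrad_le.
have grad_large : sg / (4 * (K + 1)) <= sqn (qgrad (eta k'.+1)).
  rewrite ler_pdivrMr ?mulr_gt0 //; have := sqn_ge0 (qgrad (eta k'.+1)); nra.
apply: le_trans (qobj_eps_decrease k0k') _.
rewrite lerB ?(qobj_eps_nonincreasing k0k) // ler_wpM2l //.
by rewrite divr_ge0 ?ltW.
Qed.

Lemma gam_eq0 : gam = 0.
Proof.
apply/eqP/negP => /negP /qobj_eps_drop [D D_gt0 drop].
have descent j : exists2 k, (k0 <= k)%N & qobj (eps k) <= qobj (eps k0) - j%:R * D.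
  elim: j => [|j [k k0k le_k]]; first by exists k0; rewrite // mul0r subr0.
  have [k' k0k' le_k'] := drop k k0k; exists k' => //.
  by rewrite -natr1 mulrDl mul1r; lra.
set X := (qobj (eps k0) + (sqn gam + 1) / 2) / D.
have [k k0k le_k] := descent (Num.truncn X).+1.
have := truncnS_gt X; rewrite -(ltr_pM2r D_gt0) /X divfK ?gt_eqF //.
by have := qobj_eps_lower_bound k0k; lra.
Qed.

Lemma qgradE e : qgrad e = Q *m e.
Proof. by rewrite /qgrad gam_eq0 addr0. Qed.

Lemma qobjE e : qobj e = qform Q e / 2.
Proof. by rewrite /qobj gam_eq0 bform0l addr0. Qed.

Lemma qform_eps_nonincreasing k k' : (k0 <= k)%N -> (k <= k')%N ->
  qform Q (eps k') <= qform Q (eps k).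
Proof. by move=> k0k kk'; have := qobj_eps_nonincreasing k0k kk'; rewrite !qobjE; lra. Qed.

Lemma qform_eta_next_le k : (k0 <= k)%N -> qform Q (eta k.+1) <= qform Q (eps k).
Proof. by move=> k0k; have := qobj_line_search k0k; rewrite !qobjE; lra. Qed.

Lemma qform_eps_le_eta k : (k0 <= k)%N -> qform Q (eps k) <= qform Q (eta k).
Proof.
move=> k0k; have := qobj_grad_step (eta k); rewrite -(ri_eps RI k0k) !qobjE.
have : 0 <= t / 2 * sqn (qgrad (eta k)) by rewrite mulr_ge0 ?sqn_ge0 ?divr_ge0 ?ltW.
lra.
Qed.

Lemma qform_eps_cvg0 : (fun k => qform Q (eps k)) @ \oo --> 0.
Proof.
apply/cvgr0Pnorm_lt => e e_gt0.
have [N k0N eps_small] := ri_cluster RI (divr_gt0 e_gt0 L_gt0) k0.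
near=> k; have Nk : (N <= k)%N by near: k; exact: nbhs_infty_ge.
rewrite ger0_norm ?Qpsd //; apply: le_lt_trans (qform_eps_nonincreasing k0N Nk) _.
by apply: le_lt_trans (qform_le_L _) _; rewrite mulrC -ltr_pdivlMr.
Unshelve. all: by end_near.
Qed.

Lemma qform_eta_cvg0 : (fun k => qform Q (eta k)) @ \oo --> 0.
Proof.
rewrite -cvg_shiftS; apply: (@squeeze_cvg0 _ _ _ k0 _ qform_eps_cvg0) => k k0k /=.
by rewrite Qpsd qform_eta_next_le.
Qed.

Lemma qform_eps_linear_rate : exists c : R, 0 <= c /\ c < 1 /\
  forall k, (k0 <= k)%N -> qform Q (eps k.+1) <= c * qform Q (eps k).
Proof.
set a := frob2 (pinvmx Q) + 1; have a_gt0 : 0 < a by rewrite ltr_wpDl ?frob2_ge0.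
have at_gt0 : 0 < a + t by rewrite addr_gt0.
exists (a / (a + t)); split; first by rewrite divr_ge0 ?ltW.
split; first by rewrite ltr_pdivrMr // mul1r ltrDl.
move=> k k0k; apply: le_trans (_ : _ <= a / (a + t) * qform Q (eta k.+1)) _; last first.
  by apply: ler_wpM2l; [rewrite divr_ge0 ?ltW | exact: qform_eta_next_le].
have := qobj_grad_step (eta k.+1); rewrite -(ri_eps RI (leqW k0k)) !qobjE qgradE.
have := qform_le_sqn_mulmx (eta k.+1) Qsym; rewrite -/a.
have := Qpsd (eps k.+1); have := sqn_ge0 (Q *m eta k.+1).
move: (qform Q (eps k.+1)) (qform Q (eta k.+1)) (sqn (Q *m eta k.+1)) => qe q s.
move=> s_ge0 qe_ge0 q_le step; rewrite mulrAC ler_pdivlMr //.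
have := t_gt0; nra.
Qed.

Section Superlinear.
Hypothesis Qspd : spd Q.
Variables (mm MM : R).
Hypothesis mm_gt0 : 0 < mm.
Hypothesis MM_ge0 : 0 <= MM.
Hypothesis Hk_sym : forall k, (Hk k)^T = Hk k.
Hypothesis Hk_lb : forall k v, mm * sqn v <= qform (Hk k) v.
Hypothesis Hk_ub : forall k v, qform (Hk k) v <= MM * sqn v.

Definition dennis_more k := enorm ((invmx (Hk k) - Q) *m dir k) / enorm (dir k).

Let Hk_psd k : psd (Hk k).
Proof. by move=> v; apply: le_trans (Hk_lb k v); rewrite mulr_ge0 ?sqn_ge0 ?ltW. Qed.

Lemma sqn_dir_le k : sqn (dir k) <= MM ^+ 2 * L ^+ 2 * sqn (eps k).
Proof.
rewrite /qdir sqnN qgradE.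
apply: le_trans (sqn_mulmx_le_qform _ (Hk_sym k) (Hk_psd k) MM_ge0 (Hk_ub k)) _.
rewrite -mulrA expr2 -mulrA ler_wpM2l //; apply: le_trans (Hk_ub _ _) _.
by rewrite ler_wpM2l ?(ri_lipschitz RI).
Qed.

Lemma sqn_le_qform v : sqn v <= frob2 (invmx Q) * L * qform Q v.
Proof.
have QVQ : invmx Q *m Q = 1%:M by rewrite mulVmx ?spd_unitmx.
rewrite -{1}[v]mul1mx -QVQ -mulmxA -mulrA; apply: le_trans (sqn_mulmx_le _ _) _.
rewrite ler_wpM2l ?frob2_ge0 // sqn_mulmx_le_qform ?ltW //; exact: qform_le_L.
Qed.

(* [eps k + dir k] is the error of the quasi-Newton step; this is where the Dennis-More
   ratio enters. *)
Lemma residualE k : Q *m (eps k + dir k) = - ((invmx (Hk k) - Q) *m dir k).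
Proof.
have Hk_unit : Hk k \in unitmx.
  apply: spd_unitmx; split => // v /sqn_gt0 v_gt0.
  by apply: lt_le_trans (Hk_lb k v); rewrite mulr_gt0.
rewrite mulmxBl {2}/qdir mulmxN mulmxA mulVmx // mul1mx qgradE.
by rewrite mulmxDr opprB opprK addrC.
Qed.

Lemma sqn_residual_le k :
  sqn (eps k + dir k) <= frob2 (invmx Q) * sqn ((invmx (Hk k) - Q) *m dir k).
Proof.
have QVQ : invmx Q *m Q = 1%:M by rewrite mulVmx ?spd_unitmx.
rewrite -{1}[_ + _]mul1mx -QVQ -mulmxA residualE -(sqnN ((_ - _) *m _)).
exact: sqn_mulmx_le.
Qed.

Lemma line_search_residual k : (k0 <= k)%N ->
  (al k - 1) ^+ 2 * qform Q (dir k) <= L * sqn (eps k + dir k).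
Proof.
move=> k0k; have q_gt0 : 0 < qform Q (dir k) by rewrite lt_def qform_dir_neq0 ?Qpsd.
have al_q : (al k - 1) * qform Q (dir k) = - bform Q (eps k + dir k) (dir k).
  rewrite mulrBl mul1r (ri_al RI k0k) mulrAC -mulrA divff ?gt_eqF // mulr1.
  by rewrite qgradE bform1Ml // bformDl -qformE opprD.
apply: le_trans (qform_le_L _); rewrite -(ler_pM2r q_gt0) -mulrA -expr2 -exprMn al_q sqrrN.
exact: bform_CauchySchwarz.
Qed.

Lemma sqn_eta_next_le k : (k0 <= k)%N ->
  sqn (eta k.+1) <= (2 + 2 * (frob2 (invmx Q) * L ^+ 2)) * sqn (eps k + dir k).
Proof.
move=> k0k; have -> : eta k.+1 = (eps k + dir k) + (al k - 1) *: dir k.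
  by rewrite (ri_eta RI k0k); apply/matrixP => i j; rewrite !mxE; ring.
apply: le_trans (sqnD_le _ _) _; rewrite sqnZ [X in _ <= X]mulrDl lerD2l -mulrA ler_wpM2l //.
apply: le_trans (_ : _ <= frob2 (invmx Q) * L * ((al k - 1) ^+ 2 * qform Q (dir k))) _.
  by rewrite mulrCA ler_wpM2l ?sqr_ge0 ?sqn_le_qform.
have -> : frob2 (invmx Q) * L ^+ 2 * sqn (eps k + dir k)
  = frob2 (invmx Q) * L * (L * sqn (eps k + dir k)) by ring.
apply: ler_wpM2l; first by rewrite mulr_ge0 ?frob2_ge0 ?ltW.
exact: line_search_residual.
Qed.

Lemma sqn_eps_next_le k : (k0 <= k)%N ->
  sqn (eps k.+1) <= frob2 (1%:M - t *: Q) * sqn (eta k.+1).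
Proof.
move=> k0k; rewrite (ri_eps RI (leqW k0k)) qgradE.
suff -> : eta k.+1 - t *: (Q *m eta k.+1) = (1%:M - t *: Q) *m eta k.+1 by exact: sqn_mulmx_le.
by rewrite mulmxBl mul1mx -scalemxAl.
Qed.

Lemma enorm_eps_ratio_le : exists2 C, 0 <= C & forall k, (k0 <= k)%N ->
  enorm (eps k.+1) / enorm (eps k) <= C * dennis_more k.
Proof.
set K2 := frob2 (invmx Q); set K3 := frob2 (1%:M - t *: Q).
set C2 := K3 * ((2 + 2 * (K2 * L ^+ 2)) * K2) * (MM ^+ 2 * L ^+ 2).
have C2_ge0 : 0 <= C2.
  by rewrite /C2 /K2 /K3 !mulr_ge0 ?addr_ge0 ?mulr_ge0 ?frob2_ge0 ?sqr_ge0 // ltW.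
exists (Num.sqrt C2) => [|k k0k]; first exact: sqrtr_ge0.
have dir_neq0 : dir k != 0.
  by apply: contra (qform_dir_neq0 k0k) => /eqP ->; rewrite qformE bform0r.
have sqn_w : sqn ((invmx (Hk k) - Q) *m dir k) = dennis_more k ^+ 2 * sqn (dir k).
  by rewrite /dennis_more expr_div_n !enorm_sqr divfK ?gt_eqF ?sqn_gt0.
have sqn_eps_next : sqn (eps k.+1) <= C2 * (dennis_more k ^+ 2 * sqn (eps k)).
  have -> : C2 * (dennis_more k ^+ 2 * sqn (eps k)) = K3 * ((2 + 2 * (K2 * L ^+ 2)) *
      (K2 * (dennis_more k ^+ 2 * (MM ^+ 2 * L ^+ 2 * sqn (eps k))))) by rewrite /C2; ring.
  have A_ge0 : 0 <= 2 + 2 * (K2 * L ^+ 2).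
    by have := frob2_ge0 (invmx Q); have := sqr_ge0 L; rewrite /K2; nra.
  apply: le_trans (sqn_eps_next_le k0k) (ler_wpM2l (frob2_ge0 _) _).
  apply: le_trans (sqn_eta_next_le k0k) (ler_wpM2l A_ge0 _).
  apply: le_trans (sqn_residual_le k) (ler_wpM2l (frob2_ge0 _) _).
  by rewrite sqn_w ler_wpM2l ?sqr_ge0 ?sqn_dir_le.
clearbody C2; have ratio_ge0 : 0 <= dennis_more k by rewrite divr_ge0 ?enorm_ge0.
have [->|eps_neq0] := eqVneq (enorm (eps k)) 0.
  by rewrite invr0 mulr0 mulr_ge0 ?sqrtr_ge0.
rewrite ler_pdivrMr ?lt_def ?eps_neq0 ?enorm_ge0 //.
have -> : Num.sqrt C2 * dennis_more k * enorm (eps k)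
    = Num.sqrt (C2 * (dennis_more k ^+ 2 * sqn (eps k))).
  by rewrite sqrtrM // sqrtrM ?sqr_ge0 // sqrtr_sqr ger0_norm // mulrA.
exact: ler_wsqrtr.
Qed.

Lemma enorm_eps_superlinear : dennis_more @ \oo --> 0 ->
  (fun k => enorm (eps k.+1) / enorm (eps k)) @ \oo --> 0.
Proof.
move=> dm0; have [C C_ge0 ratio_le] := enorm_eps_ratio_le.
have Cdm0 : (fun k => C * dennis_more k) @ \oo --> (C * 0 : R) by exact: cvgMl_tmp.
rewrite mulr0 in Cdm0.
apply: (@squeeze_cvg0 _ _ _ k0 _ Cdm0) => k k0k.
by rewrite divr_ge0 ?enorm_ge0 ?ratio_le.
Qed.

End Superlinear.

End ReducedIteration.

Section SettledSupport.
Variables (R : realType) (m n : nat) (A : 'M[R]_(m, n)) (b : 'cV[R]_m).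
Variables (L lam mu : R) (Hs : nat -> 'M[R]_n) (alpha : nat -> R).
Variables (x y : nat -> 'cV[R]_n) (xs : 'cV[R]_n) (k0 : nat).
Hypothesis L_gt0 : 0 < L.
Hypothesis lipschitz : forall u v, enorm (gradf A b u - gradf A b v) <= L * enorm (u - v).
Hypothesis lam_gt0 : 0 < lam.
Hypothesis mu_gt0 : 0 < mu.
Hypothesis iter : vmepiht A b L lam mu Hs alpha x y.
Hypothesis cluster : cluster_pt x xs.
Hypothesis settled : forall k, (k0 <= k)%N -> Iz (y k) = Iz (x k) /\ Iz (x k) = Iz xs.
Hypothesis alpha_gt0 : forall k, (k0 <= k)%N -> 0 < alpha k.

Local Notation S := (Sset xs).
Local Notation Q := (psub S (A^T *m A)).
Local Notation gam := (subv S (gradf A b xs)).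
Local Notation eps := (fun k => subv S (x k - xs)).
Local Notation eta := (fun k => subv S (y k - xs)).
Local Notation Hstar := (fun k => psub S (Hs k)).

Lemma subv_gradf z : supported S (z - xs) ->
  subv S (gradf A b z) = qgrad Q gam (subv S (z - xs)).
Proof.
move=> supp; rewrite /qgrad -[gradf A b z](subrK (gradf A b xs)) gradfB.
by rewrite !subvE mulmxDr -{1}(subvK supp) psubE subvE !mulmxA.
Qed.

Lemma Q_lipschitz w : sqn (Q *m w) <= L ^+ 2 * sqn w.
Proof.
move: (lipschitz ((selmx S)^T *m w) 0); rewrite gradfB subr0 -!mulmxA => le_L.
have Lw_ge0 : 0 <= L * enorm ((selmx S)^T *m w) by rewrite mulr_ge0 ?enorm_ge0 ?ltW.
rewrite psubE -!mulmxA -subvE; apply: le_trans (sqn_subv_le _ _) _.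
by rewrite -(sqn_lift w) -!enorm_sqr -exprMn ler_sqr ?nnegrE ?enorm_ge0.
Qed.

Lemma settled_x k : (k0 <= k)%N -> Iz (x k) = Iz xs.
Proof. by case/settled. Qed.

Lemma settled_y k : (k0 <= k)%N -> Iz (y k) = Iz xs.
Proof. by case/settled=> ->. Qed.

Lemma subv_gradf_x k : (k0 <= k)%N -> subv S (gradf A b (x k)) = qgrad Q gam (eps k).
Proof. by move=> k0k; rewrite subv_gradf //; apply: supported_Sset; rewrite settled_x. Qed.

Lemma reduced_eps k : (k0 <= k)%N ->
  eps k = eta k - (L + mu)^-1 *: qgrad Q gam (eta k).
Proof.
move=> k0k; have [x_min _] := iter k.
rewrite /= {1}(iht_sub_minimizerE L_gt0 (ltW mu_gt0) (ltW lam_gt0) x_min).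
rewrite settled_x // -setC_Sset subvB subv_projC.
have supp_y : supported S (y k - xs) by apply: supported_Sset; rewrite settled_y.
rewrite -(subv_gradf supp_y) !subvB subvZ.
by apply/matrixP => i j; rewrite !mxE; ring.
Qed.

Lemma reduced_eta k : (k0 <= k)%N ->
  eta k.+1 = eps k + alpha k *: qdir Q gam (Hstar k) (eps k).
Proof.
move=> k0k; have [_ [_ [bd [_ y_next]]]] := iter k.
rewrite /Sset settled_x // -/S in bd.
rewrite /= /qdir -subv_gradf_x // y_next settled_x // -setC_Sset subvB subv_projC.
rewrite !subvB subvZ subv_block_diag_mulmx //.
by apply/matrixP => i j; rewrite !mxE; ring.
Qed.

Lemma reduced_alpha k : (k0 <= k)%N -> alpha k =
  - bform 1%:M (qgrad Q gam (eps k)) (qdir Q gam (Hstar k) (eps k))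
  / qform Q (qdir Q gam (Hstar k) (eps k)).
Proof.
move=> k0k; have [_ [_ [_ [alphaE _]]]] := iter k.
move: (alpha_gt0 k0k); rewrite alphaE /alpha_rule /Sset settled_x // -/S.
by rewrite subv_gradf_x //; case: ifP => [_|_ _]; rewrite ?ltxx // /bform mulmx1.
Qed.

Lemma reduced_cluster e : 0 < e -> forall N, exists2 k, (N <= k)%N & sqn (eps k) < e.
Proof.
move=> e_gt0 N; have sqrt_e_gt0 : 0 < Num.sqrt e by rewrite sqrtr_gt0.
have [k [Nk x_near]] := cluster sqrt_e_gt0 N.
exists k => //; apply: le_lt_trans (sqn_subv_le _ _) _.
by rewrite -enorm_sqr -(sqr_sqrtr (ltW e_gt0)) ltrXn2r ?nnegrE ?enorm_ge0 ?sqrtr_ge0.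
Qed.

Lemma vmepiht_reduced :
  reduced_iteration Q gam L (L + mu)^-1 eps eta Hstar alpha k0.
Proof.
have Lmu_gt0 : 0 < L + mu by rewrite addr_gt0.
split.
- by rewrite psub_trmx // trmx_mul trmxK.
- by move=> w; rewrite -qform_lift qform_AtA sqn_ge0.
- exact: L_gt0.
- exact: Q_lipschitz.
- by rewrite invr_gt0.
- by rewrite mulrC ler_pdivrMr // mul1r lerDl ltW.
- exact: reduced_eps.
- exact: reduced_eta.
- exact: reduced_alpha.
- exact: alpha_gt0.
- exact: reduced_cluster.
Qed.

Let RI := vmepiht_reduced.

Lemma qform_x_settled k : (k0 <= k)%N -> qform (A^T *m A) (x k - xs) = qform Q (eps k).
Proof.
by move=> k0k; rewrite (qform_supported (S := S)) //; apply: supported_Sset; rewrite settled_x.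
Qed.

Lemma qform_y_settled k : (k0 <= k)%N -> qform (A^T *m A) (y k - xs) = qform Q (eta k).
Proof.
by move=> k0k; rewrite (qform_supported (S := S)) //; apply: supported_Sset; rewrite settled_y.
Qed.

Lemma enorm_x_settled k : (k0 <= k)%N -> enorm (x k - xs) = enorm (eps k).
Proof.
by move=> k0k; rewrite /enorm (sqn_supported (S := S)) //; apply: supported_Sset; rewrite settled_x.
Qed.

Lemma qform_x_nonincreasing k : (k0 <= k)%N ->
  qform (A^T *m A) (x k.+1 - xs) <= qform (A^T *m A) (x k - xs).
Proof.
move=> k0k; rewrite !qform_x_settled ?leqW //.
exact (qform_eps_nonincreasing RI k0k (leqnSn k)).
Qed.

Lemma qform_x_cvg0 : (fun k => qform (A^T *m A) (x k - xs)) @ \oo --> 0.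
Proof. exact: cvg_eq_from qform_x_settled (qform_eps_cvg0 RI). Qed.

Lemma qform_y_nonincreasing k : (k0 <= k)%N ->
  qform (A^T *m A) (y k.+1 - xs) <= qform (A^T *m A) (y k - xs).
Proof.
move=> k0k; rewrite !qform_y_settled ?leqW //.
exact: le_trans (qform_eta_next_le RI k0k) (qform_eps_le_eta RI k0k).
Qed.

Lemma qform_y_cvg0 : (fun k => qform (A^T *m A) (y k - xs)) @ \oo --> 0.
Proof. exact: cvg_eq_from qform_y_settled (qform_eta_cvg0 RI). Qed.

Lemma y_local_min k : (k0 <= k)%N -> qform (A^T *m A) (y k - xs) = 0 ->
  local_min (Hobj A b lam) (y k).
Proof.
move=> k0k q0; apply: stationary_local_min => // i yi0.
have iS : i \in S by rewrite /Sset -(settled_y k0k) !inE yi0.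
have -> : gradf A b (y k) = gradf A b xs.
  have A0 : A *m (y k - xs) = 0 by apply: sqn_eq0; rewrite -qform_AtA.
  by apply/eqP; rewrite -subr_eq0 gradfB -mulmxA A0 mulmx0.
have := trmx_selmxK S (gradf A b xs); rewrite -subvE (gam_eq0 RI) mulmx0.
by move=> /(congr1 (fun v : 'cV[R]_n => v i 0)); rewrite !mxE inE iS.
Qed.

Lemma qform_x_linear_rate : exists c : R, 0 <= c /\ c < 1 /\
  forall k, (k0 <= k)%N -> qform (A^T *m A) (x k.+1 - xs) <= c * qform (A^T *m A) (x k - xs).
Proof.
have [c [c_ge0 [c_lt1 contract]]] := qform_eps_linear_rate RI.
exists c; split => //; split => // k k0k.
by rewrite !qform_x_settled ?leqW // contract.
Qed.

Lemma enorm_x_superlinear (mm MM : R) : 0 < mm -> mm <= MM ->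
  (forall k v, mm * sqn v <= qform (Hs k) v /\ qform (Hs k) v <= MM * sqn v) ->
  spd Q ->
  (fun k => enorm ((invmx (Hstar k) - Q) *m - (Hstar k *m subv S (gradf A b (x k))))
     / enorm (- (Hstar k *m subv S (gradf A b (x k))))) @ \oo --> 0 ->
  (fun k => enorm (x k.+1 - xs) / enorm (x k - xs)) @ \oo --> 0.
Proof.
move=> mm_gt0 mm_le_MM Hs_bounds Qspd dm0.
have MM_ge0 : 0 <= MM by rewrite (le_trans (ltW mm_gt0)).
have Hstar_sym k : (Hstar k)^T = Hstar k by apply: psub_trmx; case: (iter k) => _ [[]].
have Hstar_lb k v : mm * sqn v <= qform (Hstar k) v.
  by rewrite -qform_lift -sqn_lift; case: (Hs_bounds k ((selmx S)^T *m v)).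
have Hstar_ub k v : qform (Hstar k) v <= MM * sqn v.
  by rewrite -qform_lift -sqn_lift; case: (Hs_bounds k ((selmx S)^T *m v)).
apply: (@cvg_eq_from _ _ _ k0) => [k k0k|]; first by rewrite /= !enorm_x_settled ?leqW.
apply: (enorm_eps_superlinear RI Qspd mm_gt0 MM_ge0 Hstar_sym Hstar_lb Hstar_ub).
apply: (@cvg_eq_from _ _ _ k0 _ _ dm0) => k k0k.
by rewrite /dennis_more /qdir subv_gradf_x.
Qed.

End SettledSupport.

Theorem theorem2 (R : realType) (m n : nat) (A : 'M[R]_(m, n)) (b : 'cV[R]_m)
  (L lam mu : R) (Hs : nat -> 'M[R]_n) (alpha : nat -> R)
  (x y : nat -> 'cV[R]_n) (xs : 'cV[R]_n) (k0 : nat) :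
  0 < L ->
  (forall u v, enorm (gradf A b u - gradf A b v) <= L * enorm (u - v)) ->
  0 < lam -> 0 < mu ->
  vmepiht A b L lam mu Hs alpha x y ->
  cluster_pt x xs ->
  (forall k, (k0 <= k)%N -> Iz (y k) = Iz (x k) /\ Iz (x k) = Iz xs) ->
  (forall k, (k0 <= k)%N -> 0 < alpha k) ->
  let AtA := A^T *m A in
  let S := Sset xs in
  let Q := psub S AtA in
  let Hstar := fun k => psub S (Hs k) in
  let dstar := fun k => - (Hstar k *m subv S (gradf A b (x k))) in
  (* (1) *)
  ((forall k, (k0 <= k)%N -> qform AtA (x k.+1 - xs) <= qform AtA (x k - xs))
   /\ (fun k => qform AtA (x k - xs)) @ \oo --> (0 : R)
   /\ (forall k, (k0 <= k)%N -> qform AtA (y k.+1 - xs) <= qform AtA (y k - xs))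
   /\ (fun k => qform AtA (y k - xs)) @ \oo --> (0 : R)
   /\ (forall k, (k0 <= k)%N -> qform AtA (y k - xs) = 0 ->
         local_min (Hobj A b lam) (y k)))
  /\
  (* (2) *)
  ((exists mm MM : R, 0 < mm /\ mm <= MM /\
      forall k (v : 'cV[R]_n), mm * sqn v <= qform (Hs k) v /\ qform (Hs k) v <= MM * sqn v) ->
   exists c : R, 0 <= c /\ c < 1 /\
     forall k, (k0 <= k)%N -> qform AtA (x k.+1 - xs) <= c * qform AtA (x k - xs))
  /\
  (* (3) *)
  ((exists mm MM : R, 0 < mm /\ mm <= MM /\
      forall k (v : 'cV[R]_n), mm * sqn v <= qform (Hs k) v /\ qform (Hs k) v <= MM * sqn v) ->
   spd Q ->
   (fun k => enorm ((invmx (Hstar k) - Q) *m dstar k) / enorm (dstar k)) @ \oo --> (0 : R) ->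
   (fun k => enorm (x k.+1 - xs) / enorm (x k - xs)) @ \oo --> (0 : R)).
Proof.
move=> L_gt0 lip lam_gt0 mu_gt0 iter cl settled al_gt0 AtA S Q Hstar dstar.
split; [split; [|split; [|split; [|split]]] | split].
- exact: (qform_x_nonincreasing L_gt0 lip lam_gt0 mu_gt0 iter cl settled al_gt0).
- exact: (qform_x_cvg0 L_gt0 lip lam_gt0 mu_gt0 iter cl settled al_gt0).
- exact: (qform_y_nonincreasing L_gt0 lip lam_gt0 mu_gt0 iter cl settled al_gt0).
- exact: (qform_y_cvg0 L_gt0 lip lam_gt0 mu_gt0 iter cl settled al_gt0).
- exact: (y_local_min L_gt0 lip lam_gt0 mu_gt0 iter cl settled al_gt0).
- (* (2) does not need the bounds on [H_k]. *)
  by move=> _; exact: (qform_x_linear_rate L_gt0 lip lam_gt0 mu_gt0 iter cl settled al_gt0).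
- move=> [mm [MM [mm_gt0 [mm_le_MM Hs_bounds]]]].
  exact: (enorm_x_superlinear L_gt0 lip lam_gt0 mu_gt0 iter cl settled al_gt0 mm_gt0 mm_le_MM).
Qed.
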